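(* Let $G=(V,E)$ be a connected graph on $n\geq 4$ vertices with $V=\{p_1,\ldots,p_{n-1},q\}$, where $p_1-p_2-\cdots-p_{n-1}$ is a path in $G$. If $\psi_{n-1}(G)=2$ and $\psi_n(G)=0$, then $2\leq d(q)\leq \left\lceil\frac{n-3}{2}\right\rceil$.
   Context: All graphs are finite and simple. For a graph $G$ and a positive integer $k$, a $k$-path vertex cover ($k$-PVC) of $G$ is a set $S$ of vertices such that every path on $k$ vertices in $G$ contains at least one vertex of $S$ (if $G$ has no path on $k$ vertices, the empty set is a $k$-PVC). $\psi_k(G)$ denotes the minimum cardinality of a $k$-PVC of $G$. $d(v)$ is the degree of a vertex $v$. *)

(* A simple graph is a symmetric irreflexive relation e on a finType T. *)
From mathcomp Require Import all_boot.
Set Implicit Arguments. Unset Strict Implicit. Unset Printing Implicit Defensive.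

Section PVC.
Variables (T : finType) (e : rel T).

Definition kpath (k : nat) (t : k.-tuple T) : bool := uniq t && sorted e t.

Definition is_kpvc (k : nat) (S : {set T}) : bool :=
  [forall t : k.-tuple T, kpath t ==> has (fun x => x \in S) t].

(* psi_k(G): minimum cardinality of a k-PVC (setT is one for k >= 1) *)
Definition psi (k : nat) : nat :=
  \big[minn/#|T|]_(S : {set T} | is_kpvc k S) #|S|.

Definition deg (v : T) : nat := #|[set u | e v u]|.

Definition connected_graph : Prop := forall x y : T, connect e x y.
End PVC.

From mathcomp Require Import all_boot zify.
Set Implicit Arguments. Unset Strict Implicit. Unset Printing Implicit Defensive.

(** If [q] were adjacent to an end of the path [p_1 ... p_(n-1)], or to two
consecutive vertices of it, inserting [q] there would give a path on all [n]
vertices, contradicting [psi_n = 0].  So the neighbours of [q] lie among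
[p_2, ..., p_(n-2)] with no two consecutive, whence [d(q) <= (n-2)/2].
Connectivity gives [d(q) >= 1], and [d(q) = 1] is impossible: if [v] were the
only neighbour of [q], every path on [n-1] vertices avoiding [v] would contain
[q] and hence [v], so [{v}] would be an [(n-1)]-PVC, contradicting
[psi_(n-1) = 2]. *)

Lemma sorted_of_adjacent (T : Type) (r : rel T) (s : seq T) :
  (forall s1 y z s2, s = s1 ++ y :: z :: s2 -> r y z) -> sorted r s.
Proof.
elim: s => [|x [|y s] IH] Hr //=.
rewrite (Hr [::] x y s) //=; apply: IH => s1 a b s2 Es.
by apply: (Hr (x :: s1)); rewrite Es.
Qed.

Lemma sorted_insert (T : Type) (r : rel T) (s1 s2 : seq T) x :
  sorted r (s1 ++ s2) ->
  (0 < size s1 -> r (last x s1) x) -> (0 < size s2 -> r x (head x s2)) ->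
  sorted r (s1 ++ x :: s2).
Proof.
have path_x s : sorted r s -> (0 < size s -> r x (head x s)) -> path r x s.
  by case: s => //= y s -> ->.
case: s1 => [|a s1] /= Hs Hl Hh; first exact: path_x.
move: Hs; rewrite !cat_path /= => /andP[-> Hs2].
by rewrite Hl //= path_x // (path_sorted Hs2).
Qed.

Lemma count_sparse_le (T : Type) (a : pred T) (x : T) (s : seq T) :
  sorted (fun y z => ~~ (a y && a z)) (x :: s) ->
  2 * count a (x :: s) + ~~ a x + ~~ a (last x s) <= (size s).+2.
Proof.
elim: s x => [|y s IH] x /=; first by case: (a x).
case/andP=> Hxy /IH; move: Hxy; rewrite /= mulnDr.
by case: (a x); case: (a y) => //=; lia.
Qed.

Lemma mem_of_card_uniq (T : finType) (s : seq T) x :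
  uniq s -> #|T| <= size s -> x \in s.
Proof.
move=> Hu Hs; apply/negPn/negP => xs.
have /card_uniqP Hc : uniq (x :: s) by rewrite /= xs.
by have := max_card (mem (x :: s)); rewrite Hc /= ltnNge Hs.
Qed.

Lemma sorted_map_enum_ord (T : Type) (r : rel T) m (p : 'I_m -> T) :
  (forall i j : 'I_m, nat_of_ord j = i.+1 -> r (p i) (p j)) ->
  sorted r [seq p i | i <- enum 'I_m].
Proof.
move=> Hp; case: m p Hp => [|m] p Hp; first by rewrite enum_ord0.
have nthE (i : 'I_m.+1) : nth (p ord0) [seq p i | i <- enum 'I_m.+1] i = p i.
  by rewrite (nth_map ord0) ?size_enum_ord // nth_ord_enum.
apply/(sortedP (p ord0)) => k; rewrite size_map size_enum_ord => Hk.
have := Hp (Ordinal (ltnW Hk)) (Ordinal Hk) erefl.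
by rewrite -(nthE (Ordinal (ltnW Hk))) -(nthE (Ordinal Hk)).
Qed.

Section Graph.
Variables (T : finType) (e : rel T).
Hypotheses (e_sym : symmetric e) (e_irr : irreflexive e).

Lemma psi_le_card k (S : {set T}) : is_kpvc e k S -> psi e k <= #|S|.
Proof.
move=> HS; rewrite /psi.
have : S \in index_enum {set T} by rewrite mem_index_enum.
elim: (index_enum _) => [|i r IH] //; rewrite inE big_cons.
case/orP => [/eqP <-|Hr]; first by rewrite HS geq_minl.
case: ifP => _; last exact: IH.
exact: leq_trans (geq_minr _ _) (IH Hr).
Qed.

Lemma psi_gt0 (s : seq T) :
  s != [::] -> uniq s -> sorted e s -> 0 < psi e (size s).
Proof.
case: s => [|x s] // _ Hu Hs.
have Ht : kpath e (in_tuple (x :: s)) by exact/andP.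
apply: (big_ind (fun m => 0 < m)); first by apply/card_gt0P; exists x.
  by move=> m1 m2; rewrite leq_min => -> ->.
move=> S /forallP/(_ (in_tuple (x :: s))); rewrite Ht implyTb => /hasP[y _ yS].
by apply/card_gt0P; exists y.
Qed.

Lemma sorted_has_nbr (s : seq T) x :
  sorted e s -> x \in s -> 1 < size s -> exists2 y, y \in s & e x y.
Proof.
elim: s => [|a s IH] //=; case: s IH => [|b s] IH //= /andP[eab Hs].
rewrite inE => /orP[/eqP->|xs] _; first by exists b; rewrite ?inE ?eqxx ?orbT.
case: s IH Hs xs => [|c s] IH Hs xs.
  by move: xs; rewrite inE => /eqP->; exists a; rewrite ?inE ?eqxx // e_sym.
by have [y ys Hy] := IH Hs xs isT; exists y; rewrite // inE ys orbT.
Qed.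

Lemma connected_deg_gt0 x y : connected_graph e -> x != y -> 0 < deg e x.
Proof.
move=> Hconn; case/connectP: (Hconn x y) => [[|z s] /= Hp ->]; first by rewrite eqxx.
by case/andP: Hp => Hxz _ _; apply/card_gt0P; exists z; rewrite inE.
Qed.

Lemma kpvc_single_nbr x v :
  2 < #|T| -> [set u | e x u] = [set v] -> is_kpvc e #|T|.-1 [set v].
Proof.
move=> HT Hnbr; have Hxv : e x v by rewrite -in_set Hnbr set11.
have vx : v != x by apply: contraTneq Hxv => ->; rewrite e_irr.
apply/forallP => t; apply/implyP => /andP[Hu Hs]; apply/hasP.
case: (boolP (v \in t)) => [vt|vt]; first by exists v; rewrite ?inE.
have : x \in v :: t by apply: mem_of_card_uniq; rewrite /= ?vt ?Hu ?size_tuple //; lia.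
rewrite inE eq_sym (negPf vx) => /sorted_has_nbr[] //; first by rewrite size_tuple; lia.
by move=> y yt; rewrite -in_set Hnbr inE => /eqP Ey; rewrite -Ey yt in vt.
Qed.

Lemma deg_neq1 x : 2 < #|T| -> 1 < psi e #|T|.-1 -> deg e x != 1.
Proof.
move=> HT Hpsi; apply/cards1P => -[v Hnbr].
by have := psi_le_card (kpvc_single_nbr HT Hnbr); rewrite cards1; lia.
Qed.

Lemma psi_eq0_no_insertion (s : seq T) x :
  uniq (x :: s) -> sorted e s -> psi e (size s).+1 = 0 ->
  [/\ ~~ e x (head x s), ~~ e x (last x s)
    & sorted (fun y z => ~~ (e x y && e x z)) s].
Proof.
move=> Hu Hs Hpsi.
have no_insert s1 s2 : s = s1 ++ s2 ->
    (0 < size s1 -> e (last x s1) x) -> (0 < size s2 -> e x (head x s2)) -> False.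
  move=> Es Hl Hh; suff : 0 < psi e (size s).+1 by rewrite Hpsi.
  have -> : (size s).+1 = size (s1 ++ x :: s2) by rewrite Es !size_cat addnS.
  apply: psi_gt0; first by case: s1 {Es Hl Hh}.
    by rewrite -cat1s uniq_catCA /= -Es.
  by apply: sorted_insert; rewrite -?Es.
split.
- by apply/negP => Hh; apply: (no_insert [::] s) => // /eqP.
- apply/negP => Hl; apply: (no_insert s [::]) => //; first by rewrite cats0.
  by rewrite e_sym.
- apply: sorted_of_adjacent => s1 y z s2 Es; apply/negP => /andP[Hy Hz].
  apply: (no_insert (rcons s1 y) (z :: s2)); rewrite ?cat_rcons ?last_rcons //.
  by rewrite e_sym.
Qed.

Lemma psi_eq0_count_nbr (s : seq T) x :
  uniq (x :: s) -> sorted e s -> psi e (size s).+1 = 0 ->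
  2 * count (e x) s < size s.
Proof.
move=> Hu Hs Hpsi; have [Hhead Hlast Hsparse] := psi_eq0_no_insertion Hu Hs Hpsi.
case: s {Hu Hs} Hpsi Hhead Hlast Hsparse => [|y s] Hpsi Hhead Hlast Hsparse.
  by have := @psi_gt0 [:: x]; rewrite Hpsi; apply.
have := count_sparse_le Hsparse; rewrite (negPf Hhead) (negPf Hlast) /=; lia.
Qed.

Lemma deg_eq_count (s : seq T) x :
  uniq (x :: s) -> #|T| <= (size s).+1 -> deg e x = count (e x) s.
Proof.
move=> Hu HT; case/andP: (Hu) => _ s_uniq.
rewrite /deg -size_filter -(card_uniqP (filter_uniq _ s_uniq)).
apply: eq_card => u; rewrite inE mem_filter; case: (boolP (e x u)) => //= Hxu.
have : u \in x :: s by exact: mem_of_card_uniq.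
by rewrite inE => /predU1P[Eu|//]; rewrite Eu e_irr in Hxu.
Qed.

End Graph.

Theorem mainTheorem12 (T : finType) (e : rel T) (n : nat)
  (p : 'I_(n - 1) -> T) (q : T) :
  symmetric e -> irreflexive e ->
  4 <= n -> #|T| = n ->
  connected_graph e ->
  injective p -> (forall i, p i != q) ->
  (forall i j : 'I_(n - 1), nat_of_ord j = i.+1 -> e (p i) (p j)) ->
  psi e (n - 1) = 2 -> psi e n = 0 ->
  2 <= deg e q <= (n - 2) %/ 2.
Proof.
move=> Hsym Hirr Hn HT Hconn Hinj Hne Hpath Hpsi1 Hpsi0.
set s := [seq p i | i <- enum 'I_(n - 1)].
have s_size : size s = n - 1 by rewrite size_map size_enum_ord.
have qs_uniq : uniq (q :: s).
  rewrite /= map_inj_uniq ?enum_uniq // andbT.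
  by apply/mapP => -[i _ Eq]; move: (Hne i); rewrite Eq eqxx.
have deg_count : deg e q = count (e q) s.
  by apply: (deg_eq_count Hirr qs_uniq); rewrite HT s_size; lia.
have deg_sparse : 2 * count (e q) s < size s.
  apply: psi_eq0_count_nbr; rewrite ?s_size //; first exact: sorted_map_enum_ord.
  by rewrite (_ : (n - 1).+1 = n) //; lia.
have deg_pos : 0 < deg e q.
  have i0 : 'I_(n - 1) by exists 0; lia.
  by apply: (connected_deg_gt0 (y := p i0)); rewrite // eq_sym.
have deg_ne1 : deg e q != 1.
  by apply: (deg_neq1 Hsym Hirr); rewrite HT; [lia | rewrite -subn1 Hpsi1].
by rewrite deg_count in deg_pos deg_ne1 *; rewrite s_size in deg_sparse; lia.
Qed.
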